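(* Let $n\ge1$, let $S=\{a_1^{r_1},\dots,a_m^{r_m}\}$ be a multiset of elements of $[n]$ with $a_1<\dots<a_m$ and multiplicities $r_i\ge1$, and let $T\subseteq[n]$ be a set with $|T|=|S|=r_1+\dots+r_m$. For $1\le i\le m$ let $h(i)=|\{j\in T: j>a_i\}|-|\{j\in S: j>a_i\}|$ (elements of $S$ counted with multiplicity). Let $LP_n(S,T)$ be the set of linked partitions $\pi$ of $[n]$ with $\mathrm{left}(\pi)=S$ and $\mathrm{right}(\pi)=T$. Then $$\sum_{\pi\in LP_n(S,T)}x^{cr_2(\pi)}y^{ne_2(\pi)}=\sum_{\pi\in LP_n(S,T)}x^{ne_2(\pi)}y^{cr_2(\pi)}=\prod_{i=1}^m y^{r_ih(i)-r_i^2}\left.{h(i)\brack r_i}_q\right|_{q=x/y},$$ where ${a\brack b}_q=\frac{(q^a-1)(q^a-q)\cdots(q^a-q^{b-1})}{(q^b-1)(q^b-q)\cdots(q^b-q^{b-1})}$ is the $q$-binomial coefficient (equal to $0$ when $0\le a<b$).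
   Context: Two finite sets of integers $E,F$ are nearly disjoint if for every $i\in E\cap F$ either ($i=\min(E)$, $|E|>1$, $i\ne\min(F)$) or ($i=\min(F)$, $|F|>1$, $i\ne\min(E)$). A linked partition of $[n]$ is a set of nonempty subsets (blocks) of $[n]$ with union $[n]$, any two distinct blocks nearly disjoint. The arcs of a linked partition $\pi$ are the pairs $(i_1,j)$ where $i_1=\min(E)$ and $j\in E\setminus\{i_1\}$ for some block $E$ with $|E|\ge2$. $\mathrm{left}(\pi)$ is the multiset of left endpoints $i_1$ of arcs (one copy per arc) and $\mathrm{right}(\pi)$ the multiset (in fact a set) of right endpoints $j$ of arcs. Two arcs $(i_1,j_1),(i_2,j_2)$ form a 2-crossing if $i_1<i_2<j_1<j_2$ and a 2-nesting if $i_1<i_2<j_2<j_1$; $cr_2(\pi)$ and $ne_2(\pi)$ denote the numbers of 2-crossings and 2-nestings of $\pi$. *)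

(* The ground set [n] = {1,...,n} is represented literally
   inside 'I_n.+1 as the nonzero ordinals. *)
From mathcomp Require Import all_boot all_order all_algebra.
Set Implicit Arguments. Unset Strict Implicit. Unset Printing Implicit Defensive.
Import Order.TTheory GRing.Theory Num.Theory.

Section LinkedPartitions.
Variable n : nat.
Local Notation V := ('I_n.+1).

Definition ground : {set V} := [set i : V | i != ord0].

Definition ismin (i : V) (E : {set V}) : bool :=
  (i \in E) && [forall j in E, (i <= j)%N].

Definition nearly_disjoint (E F : {set V}) : bool :=
  [forall i in E :&: F,
     (ismin i E && (1 < #|E|)%N && ~~ ismin i F) ||
     (ismin i F && (1 < #|F|)%N && ~~ ismin i E)].

Definition linked_partition (P : {set {set V}}) : bool :=
  [&& set0 \notin P,
      \bigcup_(E in P) E == ground &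
      [forall E in P, forall F in P, (E != F) ==> nearly_disjoint E F]].

Definition arcs (P : {set {set V}}) : {set V * V} :=
  [set p : V * V | [exists E in P, [&& ismin p.1 E, p.2 \in E & p.2 != p.1]]].

(* multiplicity of i in left(pi) (one copy per arc) *)
Definition left_mult (P : {set {set V}}) (i : V) : nat :=
  #|[set p in arcs P | p.1 == i]|.

Definition right_mult (P : {set {set V}}) (j : V) : nat :=
  #|[set p in arcs P | p.2 == j]|.

Definition cr2 (P : {set {set V}}) : nat :=
  #|[set pq : (V * V) * (V * V) | [&& pq.1 \in arcs P, pq.2 \in arcs P &
      [&& (pq.1.1 < pq.2.1)%N, (pq.2.1 < pq.1.2)%N & (pq.1.2 < pq.2.2)%N]]]|.

Definition ne2 (P : {set {set V}}) : nat :=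
  #|[set pq : (V * V) * (V * V) | [&& pq.1 \in arcs P, pq.2 \in arcs P &
      [&& (pq.1.1 < pq.2.1)%N, (pq.2.1 < pq.2.2)%N & (pq.2.2 < pq.1.2)%N]]]|.

Definition LP (S : {ffun V -> nat}) (T : {set V}) (P : {set {set V}}) : bool :=
  [&& linked_partition P,
      [forall i, left_mult P i == S i] &
      [forall j, right_mult P j == (j \in T)]].

Definition hfun (S : {ffun V -> nat}) (T : {set V}) (a : V) : int :=
  (#|[set j in T | (a < j)%N]|)%:Z - (\sum_(j : V | (a < j)%N) S j)%:Z.

End LinkedPartitions.

(* q-binomial coefficient [a brack b]_q given by the product formula
   (which is 0 when 0 <= a < b since the numerator has the factor q^a - q^a);
   for negative a we use the convention 0 (irrelevant). *)
Definition qbinom (R : fieldType) (a : int) (b : nat) (q : R) : R :=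
  match a with
  | Posz a' => (\prod_(k < b) (q ^+ a' - q ^+ k)) / (\prod_(k < b) (q ^+ b - q ^+ k))
  | Negz _ => 0
  end.

(* A linked partition is determined by its arcs, so LP_n(S,T) is in bijection
   with the sets of increasing arcs whose left endpoints have multiplicities S
   and whose right endpoints are the elements of T, each used once.  Remove
   the arcs leaving the largest left endpoint m: their right endpoints form an
   S(m)-subset B of the h(m) elements of T beyond m, and what remains is an
   arc set for S without m and T \ B, with the same h at every smaller left
   endpoint.  A removed arc (m,d) crosses a remaining arc ending at b > m iff
   b < d, nests over it iff d < b, and meets no other arc; so, reading B as a
   0/1 word on the elements of T beyond m, the removed arcs add its inversions
   to cr2 and its coinversions to ne2.  Summing x^inv y^coinv over the
   S(m)-subsets gives y^(r(h-r)) [h r]_(x/y), and induction yields the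
   product.  With denominators cleared this factor is symmetric in x and y,
   which gives the second identity. *)

From mathcomp Require Import all_boot all_order all_algebra.
From mathcomp Require Import zify ring.
Set Implicit Arguments. Unset Strict Implicit. Unset Printing Implicit Defensive.
Import Order.TTheory GRing.Theory Num.Theory.

Local Open Scope ring_scope.

Section Gauss.
Variable R : fieldType.
Implicit Types (x y : R) (h r : nat).

Definition gauss_num x y h r : R := \prod_(k < r) (x ^+ h * y ^+ k - x ^+ k * y ^+ h).

(* [y ^ (r * (h - r)) * qbinom h r (x / y)] with denominators cleared, see
   [qbinom_gauss]. *)
Definition gauss x y h r : R := gauss_num x y h r / gauss_num x y r r.

Lemma gauss_numSr x y h r :
  gauss_num x y h r.+1 = gauss_num x y h r * (x ^+ h * y ^+ r - x ^+ r * y ^+ h).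
Proof. by rewrite /gauss_num big_ord_recr. Qed.

Lemma prodr_const_ord (c : R) r : \prod_(k < r) c = c ^+ r.
Proof. by rewrite prodr_const card_ord. Qed.

Lemma gauss_numSS x y h r :
  gauss_num x y h.+1 r.+1 = (x ^+ h.+1 - y ^+ h.+1) * (x * y) ^+ r * gauss_num x y h r.
Proof.
rewrite /gauss_num big_ord_recl !mulr1 !mul1r -mulrA -[(x * y) ^+ r]prodr_const_ord -big_split.
by congr (_ * _); apply: eq_bigr => k _; rewrite /bump /= !exprS; ring.
Qed.

Lemma gauss_num_eq0 x y h r : (h < r)%N -> gauss_num x y h r = 0.
Proof.
by move=> hr; rewrite /gauss_num (bigD1 (Ordinal hr)) //= subrr mul0r.
Qed.

Lemma gauss_numC x y h r : gauss_num y x h r = (-1) ^+ r * gauss_num x y h r.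
Proof.
rewrite /gauss_num -[(-1) ^+ r]prodr_const_ord -big_split /=.
by apply: eq_bigr => k _; ring.
Qed.

Lemma gaussC x y h r : gauss y x h r = gauss x y h r.
Proof.
rewrite /gauss !(gauss_numC x y) invfM mulrACA divff ?mul1r //.
by rewrite expf_neq0 // oppr_eq0 oner_eq0.
Qed.

Lemma gauss0r x y h : gauss x y h 0 = 1.
Proof. by rewrite /gauss /gauss_num !big_ord0 divr1. Qed.

Lemma gauss_eq0 x y h r : (h < r)%N -> gauss x y h r = 0.
Proof. by move=> hr; rewrite /gauss gauss_num_eq0 ?mul0r. Qed.

Lemma qbinom_gauss x y h r : y != 0 ->
  y ^ (r%:Z * h%:Z - r%:Z ^+ 2) * qbinom h r (x / y) = gauss x y h r.
Proof.
move=> y0; have [hr|rh] := ltnP h r.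
  by rewrite gauss_eq0 // /qbinom (bigD1 (Ordinal hr)) //= subrr !mul0r mulr0.
have [s ->] : exists s, h = (r + s)%N by exists (h - r)%N; lia.
have -> : r%:Z * (r + s)%N%:Z - r%:Z ^+ 2 = (r * s)%N%:Z by rewrite PoszD PoszM; ring.
have frac a b :
    (x / y) ^+ a - (x / y) ^+ b = (x ^+ a * y ^+ b - x ^+ b * y ^+ a) / (y ^+ a * y ^+ b).
  by rewrite !expr_div_n; field; rewrite !expf_neq0.
rewrite /qbinom /gauss /gauss_num.
rewrite (eq_bigr _ (fun k _ => frac _ _)) [X in _ / X](eq_bigr _ (fun k _ => frac _ _)).
rewrite !prodf_div !big_split /= !prodr_const_ord -!exprM invf_div.
set N := \prod_(k < r) (x ^+ (r + s) * _ - _); set D := \prod_(k < r) (x ^+ r * _ - _).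
set P := \prod_(k < r) y ^+ k.
have P0 : P != 0 by apply/prodf_neq0 => k _; rewrite expf_neq0.
rewrite -[y ^ _]/(y ^+ (r * s)) mulnDl [(s * r)%N]mulnC addnC exprD.
have -> : y ^+ (r * s) * (N / (y ^+ (r * s) * y ^+ (r * r) * P) * (y ^+ (r * r) * P / D))
    = (y ^+ (r * s) * y ^+ (r * r) * P) / (y ^+ (r * s) * y ^+ (r * r) * P) * (N / D).
  by ring.
by rewrite divff ?mul1r // !mulf_neq0 ?expf_neq0.
Qed.

End Gauss.

Section GaussPascal.
Variables (R : fieldType) (x y : R).
Hypotheses (x0 : x != 0) (y0 : y != 0) (xy_pow : forall k, (0 < k)%N -> x ^+ k != y ^+ k).

Lemma gauss_num_rr_neq0 r : gauss_num x y r r != 0.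
Proof.
apply/prodf_neq0 => -[k /= kr] _.
have [s ->] : exists s, r = (k + s.+1)%N by exists (r - k.+1)%N; lia.
have -> : x ^+ (k + s.+1) * y ^+ k - x ^+ k * y ^+ (k + s.+1)
    = x ^+ k * y ^+ k * (x ^+ s.+1 - y ^+ s.+1) by rewrite !exprD; ring.
by rewrite !mulf_neq0 ?expf_neq0 // subr_eq0 xy_pow.
Qed.

Lemma gaussSS h r :
  gauss x y h.+1 r.+1 = x ^+ (h - r) * gauss x y h r + y ^+ r.+1 * gauss x y h r.+1.
Proof.
have [hr|rh] := ltnP h r; first by rewrite !gauss_eq0 ?mulr0 ?addr0 // ltnW.
have [s ->] : exists s, h = (r + s)%N by exists (h - r)%N; lia.
have E0 : x ^+ r.+1 - y ^+ r.+1 != 0 by rewrite subr_eq0 xy_pow.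
rewrite /gauss !gauss_numSS gauss_numSr addKn exprMn.
move: (gauss_num_rr_neq0 r) E0 (expf_neq0 r x0) (expf_neq0 r y0); rewrite !exprS !exprD.
move: (gauss_num x y (r + s) r) (gauss_num x y r r) (x ^+ r) (y ^+ r) (x ^+ s) (y ^+ s).
by move=> G D X Y a b D0 E0 X0 Y0; field; rewrite D0 E0 X0 Y0.
Qed.

End GaussPascal.

Section SubsetInversions.
Variable N : nat.
Implicit Types (O B : {set 'I_N}) (m : 'I_N).

Definition subset_inv O B : nat := \sum_(b in O :\: B) \sum_(d in B) (b < d)%N.

Definition subset_coinv O B : nat := \sum_(b in O :\: B) \sum_(d in B) (d < b)%N.

Section MaxElement.
Variables (O : {set 'I_N}) (m : 'I_N).
Hypotheses (mO : m \in O) (m_max : forall j, j \in O -> (j <= m)%N).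

Lemma lt_max j : j \in O -> j != m -> (j < m)%N.
Proof. by move=> jO jm; rewrite ltn_neqAle m_max // andbT; apply: contra jm => /eqP/val_inj ->. Qed.

Lemma setD_setU1_max B : O :\: (m |: B) = (O :\ m) :\: B.
Proof. by apply/setP => j; rewrite !inE negb_or andbA [X in X && _]andbC. Qed.

Lemma subset_inv_setU1_max B : B \subset O :\ m ->
  subset_inv O (m |: B) = (subset_inv (O :\ m) B + (#|O :\ m| - #|B|))%N.
Proof.
move=> sB; have mB : m \notin B by apply/negP => /(subsetP sB); rewrite !inE eqxx.
have -> : (#|O :\ m| - #|B|)%N = #|(O :\ m) :\: B|.
  by rewrite [#|(O :\ m) :\: B|]cardsD (setIidPr sB).
rewrite /subset_inv setD_setU1_max -sum1_card -big_split /=.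
apply: eq_bigr => b; rewrite !inE => /andP [_ /andP [bm bO]].
by rewrite big_setU1 //= lt_max // addnC.
Qed.

Lemma subset_coinv_setU1_max B : B \subset O :\ m ->
  subset_coinv O (m |: B) = subset_coinv (O :\ m) B.
Proof.
move=> sB; rewrite /subset_coinv setD_setU1_max.
apply: eq_bigr => b; rewrite !inE => /andP [_ /andP [_ bO]].
rewrite big_setU1 /=; first by rewrite ltnNge m_max.
by apply/negP => /(subsetP sB); rewrite !inE eqxx.
Qed.

Lemma setD_max B : m \notin B -> O :\: B = m |: ((O :\ m) :\: B).
Proof.
by move=> mB; apply/setP => j; rewrite !inE; case: eqVneq => [->|] //=; rewrite mO (negbTE mB).
Qed.

Lemma subset_inv_max B : B \subset O :\ m -> subset_inv O B = subset_inv (O :\ m) B.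
Proof.
move=> sB; have mB : m \notin B by apply/negP => /(subsetP sB); rewrite !inE eqxx.
rewrite /subset_inv setD_max // big_setU1 /=; last by rewrite !inE eqxx /= andbF.
by rewrite big1 // => d /(subsetP sB); rewrite !inE ltnNge => /andP [_ /m_max ->].
Qed.

Lemma subset_coinv_max B : B \subset O :\ m ->
  subset_coinv O B = (#|B| + subset_coinv (O :\ m) B)%N.
Proof.
move=> sB; have mB : m \notin B by apply/negP => /(subsetP sB); rewrite !inE eqxx.
rewrite /subset_coinv setD_max // big_setU1 /=; last by rewrite !inE eqxx /= andbF.
congr (_ + _)%N.
rewrite -sum1_card; apply: eq_bigr => d /(subsetP sB); rewrite !inE => /andP [dm dO].
by rewrite lt_max.
Qed.

End MaxElement.

Section SubsetGeneratingFunction.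
Variables (R : comPzSemiRingType) (x y : R).

Definition subset_gf O r : R :=
  \sum_(B : {set 'I_N} | (B \subset O) && (#|B| == r)) x ^+ subset_inv O B * y ^+ subset_coinv O B.

Lemma subset_gf0 O : subset_gf O 0 = 1.
Proof.
rewrite /subset_gf (big_pred1 set0) => [|B]; last first.
  by rewrite /= cards_eq0 andb_idl // => /eqP ->; rewrite sub0set.
by rewrite /subset_inv /subset_coinv !big1 ?mulr1 // => b _; rewrite big_set0.
Qed.

Lemma subset_gf_set0 r : subset_gf set0 r.+1 = 0.
Proof.
by rewrite /subset_gf big_pred0 // => B; rewrite subset0; case: eqP => // ->; rewrite cards0.
Qed.

Lemma subset_gf_max O m r : m \in O -> (forall j, j \in O -> (j <= m)%N) ->
  subset_gf O r.+1 =
    x ^+ (#|O :\ m| - r) * subset_gf (O :\ m) r + y ^+ r.+1 * subset_gf (O :\ m) r.+1.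
Proof.
move=> mO m_max; rewrite /subset_gf (bigID (fun B => m \in B)) /= !big_distrr /=.
congr (_ + _).
  rewrite (reindex_onto (fun B => m |: B) (fun B => B :\ m)) /=; last first.
    by move=> B /andP [_ mB]; rewrite setD1K.
  apply: eq_big => [B|B /andP [/andP [/andP [sB /eqP cB] _] /eqP EB]].
    rewrite setU11 andbT subUset sub1set mO /= subsetD1.
    have [mB|mB] := boolP (m \in B); last by rewrite setU1K // cardsU1 mB eqxx !andbT.
    rewrite !andbF; apply/negbTE/negP => /andP [_ /eqP E].
    by move: mB; rewrite -E setD11.
  have mB : m \notin B by rewrite -EB setD11.
  have sB' : B \subset O :\ m by rewrite subsetD1 (subset_trans (subsetUr _ _) sB).
  move: cB; rewrite cardsU1 mB add1n => -[cB].
  by rewrite subset_inv_setU1_max // subset_coinv_setU1_max // cB mulrA -exprD addnC.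
apply: eq_big => [B|B /andP [/andP [sB /eqP cB] mB]]; first by rewrite subsetD1 andbAC.
have sB' : B \subset O :\ m by rewrite subsetD1 sB.
by rewrite (subset_inv_max mO m_max) // (subset_coinv_max mO m_max) // cB exprD mulrCA mulrA.
Qed.

End SubsetGeneratingFunction.
End SubsetInversions.

Lemma subset_gf_gauss (R : fieldType) (x y : R) N (O : {set 'I_N}) r :
  x != 0 -> y != 0 -> (forall k, (0 < k)%N -> x ^+ k != y ^+ k) ->
  subset_gf x y O r = gauss x y #|O| r.
Proof.
move=> x0 y0 xy_pow; have [k] := ubnP #|O|; elim: k O r => // k IHk O [|r] cO.
  by rewrite subset_gf0 gauss0r.
have [->|[i0 i0O]] := set_0Vmem O; first by rewrite subset_gf_set0 cards0 gauss_eq0.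
have [m /= mO m_max] := @arg_maxnP _ i0 (fun i => i \in O) val i0O.
have cOm : #|O| = #|O :\ m|.+1 by rewrite (cardsD1 m) mO.
by rewrite (subset_gf_max x y r mO m_max) cOm (gaussSS x0 y0 xy_pow) !IHk // -ltnS -cOm.
Qed.

Section FinsetSums.
Variable W : finType.
Implicit Types (X Y : {set W}) (P : pred W).

Lemma card_set_predE X P : #|[set p in X | P p]| = (\sum_(p in X) P p)%N.
Proof.
rewrite -sum1_card big_mkcond [RHS]big_mkcond /=; apply: eq_bigr => p _.
by rewrite !inE; case: (p \in X); case: (P p).
Qed.

Lemma big_setU_disjoint (R : Type) (idx : R) (op : Monoid.com_law idx) X Y (F : W -> R) :
  [disjoint X & Y] ->
  \big[op/idx]_(p in X :|: Y) F p = op (\big[op/idx]_(p in X) F p) (\big[op/idx]_(p in Y) F p).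
Proof. by move=> dXY; rewrite -bigU //; apply: eq_bigl => p; rewrite !inE. Qed.

End FinsetSums.

Section ArcSystems.
Variable n : nat.
Local Notation V := 'I_n.+1.
Implicit Types (A X Y : {set V * V}) (S : {ffun V -> nat}) (T B : {set V}) (m : V).

Definition left_deg A i : nat := #|[set p in A | p.1 == i]|.
Definition right_deg A j : nat := #|[set p in A | p.2 == j]|.

Definition arc_system S T A : bool :=
  [&& [forall p in A, (p.1 < p.2)%N],
      [forall i, left_deg A i == S i] &
      [forall j, right_deg A j == (j \in T)]].

Definition count_pairs (c : rel (V * V)) A : nat :=
  #|[set pq : (V * V) * (V * V) | [&& pq.1 \in A, pq.2 \in A & c pq.1 pq.2]]|.

Definition crossing : rel (V * V) :=
  fun p q => [&& (p.1 < q.1)%N, (q.1 < p.2)%N & (p.2 < q.2)%N].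
Definition nesting : rel (V * V) :=
  fun p q => [&& (p.1 < q.1)%N, (q.1 < q.2)%N & (q.2 < p.2)%N].

Lemma count_pairsE c A : count_pairs c A = (\sum_(p in A) \sum_(q in A) c p q)%N.
Proof.
rewrite (eq_bigr (fun p => \sum_(q in A | c p q) 1)%N); last first.
  by move=> p _; rewrite big_mkcondr; apply: eq_bigr => q _; case: (c p q).
by rewrite pair_big_dep sum1_card /count_pairs cardsE.
Qed.

Lemma left_deg_setU X Y i : [disjoint X & Y] ->
  left_deg (X :|: Y) i = (left_deg X i + left_deg Y i)%N.
Proof. by move=> dXY; rewrite /left_deg !card_set_predE big_setU_disjoint. Qed.

Lemma right_deg_setU X Y j : [disjoint X & Y] ->
  right_deg (X :|: Y) j = (right_deg X j + right_deg Y j)%N.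
Proof. by move=> dXY; rewrite /right_deg !card_set_predE big_setU_disjoint. Qed.

Section ArcSystemFacts.
Variables (S : {ffun V -> nat}) (T : {set V}) (A : {set V * V}).
Hypothesis sysA : arc_system S T A.

Lemma arc_lt p : p \in A -> (p.1 < p.2)%N.
Proof. by case/and3P: sysA => /forall_inP lt_arcs _ _; apply: lt_arcs. Qed.

Lemma left_degE i : left_deg A i = S i.
Proof. by case/and3P: sysA => _ /forallP /(_ i) /eqP. Qed.

Lemma right_degE j : right_deg A j = (j \in T).
Proof. by case/and3P: sysA => _ _ /forallP /(_ j) /eqP. Qed.

Lemma arc_right_in p : p \in A -> p.2 \in T.
Proof.
move=> pA; have := right_degE p.2; case: (p.2 \in T) => // /eqP.
by rewrite cards_eq0 => /eqP/setP/(_ p); rewrite !inE pA eqxx.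
Qed.

Lemma arc_left_pos p : p \in A -> (0 < S p.1)%N.
Proof. by move=> pA; rewrite -left_degE card_gt0; apply/set0Pn; exists p; rewrite inE pA eqxx. Qed.

Lemma arc_right_inj p q : p \in A -> q \in A -> p.2 = q.2 -> p = q.
Proof.
move=> pA qA pq; have : (right_deg A p.2 <= 1)%N by rewrite right_degE leq_b1.
by move/card_le1_eqP; apply; rewrite inE ?pA ?qA pq eqxx.
Qed.

Lemma sum_arc_right (g : V -> nat) : (\sum_(p in A) g p.2 = \sum_(b in T) g b)%N.
Proof.
rewrite (partition_big (fun p : V * V => p.2) predT) //= [RHS]big_mkcond /=.
apply: eq_bigr => b _; rewrite (eq_bigr (fun _ => g b)) => [|p /andP [_ /eqP ->]] //.
rewrite sum_nat_const (_ : #|_| = right_deg A b); last by apply: eq_card => p; rewrite !inE.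
by rewrite right_degE; case: (b \in T); rewrite ?mul1n ?mul0n.
Qed.

End ArcSystemFacts.

Lemma count_pairs_setU c X Y : [disjoint X & Y] ->
  (forall p q, p \in Y -> q \in X :|: Y -> ~~ c p q) ->
  count_pairs c (X :|: Y) = (count_pairs c X + \sum_(p in X) \sum_(q in Y) c p q)%N.
Proof.
move=> dXY cY; rewrite !count_pairsE big_setU_disjoint //= [X in (_ + X)%N]big1 ?addn0.
  by rewrite -big_split /=; apply: eq_bigr => p _; rewrite big_setU_disjoint.
by move=> p pY; apply: big1 => q qXY; apply/eqP; rewrite eqb0 cY.
Qed.

Definition arcs_from m B : {set V * V} := [set p | (p.1 == m) && (p.2 \in B)].
Definition targets m A : {set V} := [set d | (m, d) \in A].
Definition drop_left m A : {set V * V} := [set p in A | p.1 != m].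
Definition remove_left S m : {ffun V -> nat} := [ffun a => if a == m then 0%N else S a].
Definition above T m : {set V} := [set j in T | (m < j)%N].

Lemma sum_arcs_from m B (F : V * V -> nat) :
  (\sum_(p in arcs_from m B) F p = \sum_(d in B) F (m, d))%N.
Proof.
rewrite -[RHS](big_pred1_eq addn m (fun i => \sum_(d in B) F (i, d))%N) pair_big_dep /=.
by apply: eq_big => [[i d]|[i d] _] //=; rewrite inE.
Qed.

Lemma left_deg_arcs_from m B i : left_deg (arcs_from m B) i = ((m == i) * #|B|)%N.
Proof.
by rewrite /left_deg card_set_predE sum_arcs_from /= sum_nat_const mulnC.
Qed.

Lemma right_deg_arcs_from m B j : right_deg (arcs_from m B) j = (j \in B).
Proof.
rewrite /right_deg card_set_predE sum_arcs_from /=.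
have [jB|jB] := boolP (j \in B).
  by rewrite (bigD1 j) //= eqxx big1 // => d /andP [_ /negbTE ->].
by rewrite big1 // => d dB; apply/eqP; rewrite eqb0; apply: contraNneq jB => <-.
Qed.

Section NoArcFrom.
Variables (m : V) (A : {set V * V}).
Hypothesis noA : forall p, p \in A -> p.1 != m.

Lemma disjoint_arcs_from B : [disjoint A & arcs_from m B].
Proof.
rewrite -setI_eq0; apply/eqP/setP => p; rewrite !inE.
by apply/negbTE; apply/andP => -[/noA/negbTE -> ].
Qed.

Lemma targets_setU_arcs_from B : targets m (A :|: arcs_from m B) = B.
Proof.
apply/setP => d; rewrite !inE /= eqxx /=.
by case mdA: ((m, d) \in A) => //; move/noA: mdA; rewrite eqxx.
Qed.

Lemma drop_left_setU_arcs_from B : drop_left m (A :|: arcs_from m B) = A.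
Proof.
apply/setP => p; rewrite !inE; case pA: (p \in A) => /=; first by rewrite noA.
by case: (p.1 == m); rewrite ?andbF.
Qed.

End NoArcFrom.

Lemma drop_left_setU_targets m A : drop_left m A :|: arcs_from m (targets m A) = A.
Proof.
by apply/setP => -[i d]; rewrite !inE /=; case: eqP => [->|]; rewrite ?andbT ?andbF ?orbF.
Qed.

Lemma left_deg_drop_left m A : left_deg (drop_left m A) m = 0%N.
Proof.
apply/eqP; rewrite cards_eq0; apply/eqP/setP => p; rewrite !inE.
by case: (p.1 == m); rewrite ?andbF.
Qed.

Lemma targets_arc_system S T A m : arc_system S T A ->
  targets m A \subset above T m /\ #|targets m A| = S m.
Proof.
move=> sysA; split.
  by apply/subsetP => d; rewrite !inE => mdA; rewrite (arc_right_in sysA mdA) (arc_lt sysA mdA).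
have dA : [disjoint drop_left m A & arcs_from m (targets m A)].
  by apply: disjoint_arcs_from => p; rewrite inE => /andP [].
have := left_degE sysA m; rewrite -{1}(drop_left_setU_targets m A) left_deg_setU //.
by rewrite left_deg_drop_left left_deg_arcs_from eqxx mul1n.
Qed.

Lemma arc_left_neq S T A m : arc_system (remove_left S m) T A -> forall p, p \in A -> p.1 != m.
Proof. by move=> sysA p /(arc_left_pos sysA); rewrite ffunE; case: eqP. Qed.

Lemma arc_system_setU_arcs_from S T A m B :
  B \subset above T m -> #|B| = S m -> (forall p, p \in A -> p.1 != m) ->
  arc_system S T (A :|: arcs_from m B) = arc_system (remove_left S m) (T :\: B) A.
Proof.
move=> sB cB noA; have dA := disjoint_arcs_from noA B.
have mB d : d \in B -> (m < d)%N /\ d \in T by move/(subsetP sB); rewrite inE => /andP [].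
congr [&& _, _ & _].
- apply/forall_inP/forall_inP => lt_arcs p pA; first by apply: lt_arcs; rewrite inE pA.
  by move: pA; rewrite !inE => /orP [/lt_arcs //|/andP [/eqP -> /mB []]].
- apply: eq_forallb => i; rewrite left_deg_setU // left_deg_arcs_from ffunE [m == i]eq_sym.
  have [->|im] := eqVneq i m; last by rewrite mul0n addn0.
  by rewrite mul1n cB -{2}[S m]add0n eqn_add2r.
- apply: eq_forallb => j; rewrite right_deg_setU // right_deg_arcs_from !inE.
  by have [/mB [_ ->]|_] := boolP (j \in B); rewrite ?addn1 ?addn0.
Qed.

Lemma above_sub T m : above T m \subset T.
Proof. by apply/subsetP => j; rewrite inE => /andP []. Qed.

Lemma sum_setD_above m T B (g : V -> nat) : (forall b : V, (b <= m)%N -> g b = 0%N) ->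
  (\sum_(b in T :\: B) g b = \sum_(b in above T m :\: B) g b)%N.
Proof.
move=> g0; rewrite (bigID (fun b : V => (m < b)%N)) /= [X in (_ + X)%N]big1 ?addn0.
  by apply: eq_bigl => b; rewrite !inE andbA.
by move=> b /andP [_]; rewrite -leqNgt => /g0.
Qed.

Lemma sum_remove_left S m (P : pred V) : P m ->
  (\sum_(i | P i) remove_left S m i + S m = \sum_(i | P i) S i)%N.
Proof.
move=> Pm; rewrite (bigD1 m) //= [in RHS](bigD1 m) //= ffunE eqxx add0n addnC.
by congr (_ + _)%N; apply: eq_bigr => j /andP [_ /negbTE jm]; rewrite ffunE jm.
Qed.

Lemma hfun_remove_left S T B m (a : V) : B \subset above T m -> #|B| = S m -> (a < m)%N ->
  hfun (remove_left S m) (T :\: B) a = hfun S T a.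
Proof.
move=> sB cB am; have aB j : j \in B -> (a < j)%N.
  by move/(subsetP sB); rewrite inE => /andP [_ /(ltn_trans am)].
have dB : [disjoint B & T :\: B].
  by rewrite disjoints_subset; apply/subsetP => j jB; rewrite !inE jB.
have sumT : (\sum_(j in T) (a < j) = \sum_(j in T :\: B) (a < j) + #|B|)%N.
  rewrite -{1}(setID T B) (setIidPr (subset_trans sB (above_sub T m))) big_setU_disjoint //=.
  by rewrite addnC -sum1_card; congr (_ + _)%N; apply: eq_bigr => j /aB ->.
by rewrite /hfun !card_set_predE sumT -(sum_remove_left S am) cB !PoszD; ring.
Qed.

Section LargestLeftEndpoint.
Variables (S : {ffun V -> nat}) (m : V).
Hypothesis m_max : forall a, (0 < S a)%N -> (a <= m)%N.

Lemma lt_max_left a : (0 < S a)%N -> a != m -> (a < m)%N.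
Proof. by move=> Sa am; rewrite ltn_neqAle m_max // andbT; apply: contra am => /eqP/val_inj ->. Qed.

Lemma arc_left_lt T A : arc_system (remove_left S m) T A -> forall p, p \in A -> (p.1 < m)%N.
Proof.
move=> sysA p pA; have pm := arc_left_neq sysA pA.
by apply: (lt_max_left _ pm); move: (arc_left_pos sysA pA); rewrite ffunE (negbTE pm).
Qed.

Lemma count_pairs_setU_arcs_from (c : rel (V * V)) T A B : arc_system (remove_left S m) T A ->
  (forall p q, c p q -> (p.1 < q.1)%N) ->
  count_pairs c (A :|: arcs_from m B)
  = (count_pairs c A + \sum_(p in A) \sum_(d in B) c p (m, d))%N.
Proof.
move=> sysA c_lt; have dA := disjoint_arcs_from (arc_left_neq sysA) B.
rewrite count_pairs_setU //.
  by congr (_ + _)%N; apply: eq_bigr => p _; rewrite sum_arcs_from.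
move=> p q; rewrite !inE => /andP [/eqP pm _] qAB; apply/negP => /c_lt; rewrite pm ltnNge.
by case/orP: qAB => [/(arc_left_lt sysA)/ltnW -> | /andP [/eqP -> _]]; rewrite ?leqnn.
Qed.

Lemma crossings_setU_arcs_from T A B :
  arc_system (remove_left S m) (T :\: B) A -> B \subset above T m ->
  count_pairs crossing (A :|: arcs_from m B)
  = (count_pairs crossing A + subset_inv (above T m) B)%N.
Proof.
move=> sysA sB; rewrite (count_pairs_setU_arcs_from B sysA) => [|p q /and3P [] //].
congr (_ + _)%N.
rewrite (eq_bigr (fun p : V * V => \sum_(d in B) ((m < p.2) && (p.2 < d)))%N); last first.
  by move=> p pA; apply: eq_bigr => d _; rewrite /crossing /= (arc_left_lt sysA pA).
rewrite (sum_arc_right sysA (fun b : V => \sum_(d in B) ((m < b) && (b < d)))%N).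
rewrite (@sum_setD_above m) => [|b bm]; last by apply: big1 => d _; rewrite ltnNge bm.
by apply: eq_bigr => b; rewrite !inE => /and3P [_ _ ->].
Qed.

Lemma nestings_setU_arcs_from T A B :
  arc_system (remove_left S m) (T :\: B) A -> B \subset above T m ->
  count_pairs nesting (A :|: arcs_from m B)
  = (count_pairs nesting A + subset_coinv (above T m) B)%N.
Proof.
move=> sysA sB; have mB d : d \in B -> (m < d)%N by move/(subsetP sB); rewrite inE => /andP [].
rewrite (count_pairs_setU_arcs_from B sysA) => [|p q /and3P [] //].
congr (_ + _)%N; rewrite (eq_bigr (fun p : V * V => \sum_(d in B) (d < p.2))%N); last first.
  by move=> p pA; apply: eq_bigr => d dB; rewrite /nesting /= (arc_left_lt sysA pA) mB.
rewrite (sum_arc_right sysA (fun b : V => \sum_(d in B) (d < b))%N) (@sum_setD_above m) // => b bm.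
by apply: big1 => d dB; rewrite ltnNge (leq_trans bm (ltnW (mB d dB))).
Qed.

Lemma hfun_max T : hfun S T m = #|above T m|.
Proof.
rewrite /hfun big1 ?subr0 // => j mj; apply/eqP; rewrite -leqn0 leqNgt.
by apply/negP => /m_max; rewrite leqNgt mj.
Qed.

End LargestLeftEndpoint.

End ArcSystems.

Section ArcGeneratingFunction.
Variables (R : fieldType) (x y : R) (n : nat).
Local Notation V := 'I_n.+1.
Implicit Types (A : {set V * V}) (S : {ffun V -> nat}) (T B : {set V}) (m : V).

Definition arc_weight A : R := x ^+ count_pairs (@crossing n) A * y ^+ count_pairs (@nesting n) A.

Definition local_factor S T a : R :=
  y ^ ((S a)%:Z * hfun S T a - (S a)%:Z ^+ 2) * qbinom (hfun S T a) (S a) (x / y).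

Lemma sum_arc_weight_targets S T m B : (forall a, (0 < S a)%N -> (a <= m)%N) ->
  B \subset above T m -> #|B| = S m ->
  \sum_(A | arc_system S T A && (targets m A == B)) arc_weight A
  = x ^+ subset_inv (above T m) B * y ^+ subset_coinv (above T m) B *
    \sum_(A | arc_system (remove_left S m) (T :\: B) A) arc_weight A.
Proof.
move=> m_max sB cB.
rewrite big_distrr (reindex_onto (fun A => A :|: arcs_from m B) (drop_left m)) /=; last first.
  by move=> A /andP [_ /eqP <-]; rewrite drop_left_setU_targets.
have fibre A : [&& arc_system S T (A :|: arcs_from m B),
    targets m (A :|: arcs_from m B) == B & drop_left m (A :|: arcs_from m B) == A]
    = arc_system (remove_left S m) (T :\: B) A.
  apply/idP/idP => [/and3P [sysA _ /eqP dA] | sysA].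
    have noA p : p \in A -> p.1 != m by rewrite -dA inE => /andP [].
    by rewrite -(arc_system_setU_arcs_from sB cB noA).
  have noA := arc_left_neq sysA.
  rewrite (arc_system_setU_arcs_from sB cB noA) sysA.
  by rewrite targets_setU_arcs_from // drop_left_setU_arcs_from // !eqxx.
apply: eq_big => [A|A]; rewrite -andbA fibre // => sysA.
rewrite /arc_weight (crossings_setU_arcs_from m_max sysA sB).
by rewrite (nestings_setU_arcs_from m_max sysA sB) !exprD; ring.
Qed.

Hypotheses (x0 : x != 0) (y0 : y != 0) (xy_pow : forall k, (0 < k)%N -> x ^+ k != y ^+ k).

Lemma arc_system_gf0 S T : (forall a, S a = 0%N) -> #|T| = (\sum_i S i)%N ->
  \sum_(A | arc_system S T A) arc_weight A = \prod_(a | (0 < S a)%N) local_factor S T a.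
Proof.
move=> S0 cT; have T0 : T = set0.
  by apply/cards0_eq; rewrite cT big1.
rewrite big_pred0 => [|a]; last by rewrite S0.
rewrite (big_pred1 set0) => [|A].
  by rewrite /arc_weight !count_pairsE !big_set0 mulr1.
apply/idP/eqP => [sysA|->].
  by apply/setP => p; rewrite inE; apply/negbTE/negP => /(arc_left_pos sysA); rewrite S0.
rewrite T0; apply/and3P; split; first by apply/forall_inP => p; rewrite inE.
  by apply/forallP => i; rewrite /left_deg card_set_predE big_set0 S0.
by apply/forallP => j; rewrite /right_deg card_set_predE big_set0 inE.
Qed.

Lemma local_factor_max S T m : (forall a, (0 < S a)%N -> (a <= m)%N) ->
  local_factor S T m = subset_gf x y (above T m) (S m).
Proof.
by move=> m_max; rewrite /local_factor hfun_max // qbinom_gauss // subset_gf_gauss.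
Qed.

Lemma prod_local_factor_remove_left S T m B : (forall a, (0 < S a)%N -> (a <= m)%N) ->
  B \subset above T m -> #|B| = S m ->
  \prod_(a | (0 < remove_left S m a)%N) local_factor (remove_left S m) (T :\: B) a
  = \prod_(a | (0 < S a)%N && (a != m)) local_factor S T a.
Proof.
move=> m_max sB cB; apply: eq_big => a; rewrite ffunE.
  by case: eqVneq => _ /=; rewrite ?andbT ?andbF.
case: eqVneq => // am Sa; rewrite /local_factor hfun_remove_left ?ffunE ?(negbTE am) //.
exact: (lt_max_left m_max Sa am).
Qed.

Lemma arc_system_gf S T : #|T| = (\sum_i S i)%N ->
  \sum_(A | arc_system S T A) arc_weight A = \prod_(a | (0 < S a)%N) local_factor S T a.
Proof.
have [k] := ubnP (\sum_i S i)%N; elim: k S T => // k IHk S T /ltnSE sumS cT.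
have [a0 Sa0|S0] := pickP (fun a => (0 < S a)%N); last first.
  by apply: arc_system_gf0 => // a; apply/eqP; rewrite -leqn0 leqNgt S0.
have [m /= Sm m_max] := @arg_maxnP _ a0 (fun a => (0 < S a)%N) val Sa0.
rewrite (partition_big (targets m) (fun B => (B \subset above T m) && (#|B| == S m))); last first.
  by move=> A sysA; have [-> ->] := targets_arc_system m sysA; rewrite eqxx.
rewrite (eq_bigr (fun B => x ^+ subset_inv (above T m) B * y ^+ subset_coinv (above T m) B
    * \prod_(a | (0 < S a)%N && (a != m)) local_factor S T a)) => [|B /andP [sB /eqP cB]].
  by rewrite -big_distrl /= (bigD1 m Sm) /= local_factor_max.
rewrite sum_arc_weight_targets //; congr (_ * _).
have sumS' := @sum_remove_left n S m xpredT isT.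
rewrite IHk ?prod_local_factor_remove_left //; first by move: sumS Sm; rewrite -sumS'; lia.
by rewrite cardsD (setIidPr (subset_trans sB (above_sub T m))) cT cB -sumS' addnK.
Qed.

End ArcGeneratingFunction.

Section LinkedPartitionsAsArcSystems.
Variable n : nat.
Local Notation V := 'I_n.+1.
Implicit Types (P : {set {set V}}) (E F : {set V}) (A : {set V * V}).

Lemma ismin_uniq (i j : V) E : ismin i E -> ismin j E -> i = j.
Proof.
case/andP => iE /forall_inP i_min /andP [jE /forall_inP j_min].
by apply/val_inj/eqP; rewrite eqn_leq i_min // j_min.
Qed.

Lemma arcsP P (i d : V) :
  reflect (exists2 E, E \in P & [&& ismin i E, d \in E & d != i]) ((i, d) \in arcs P).
Proof. by rewrite inE; apply: (iffP exists_inP). Qed.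

Section LinkedPartitionFacts.
Variable P : {set {set V}}.
Hypothesis linP : linked_partition P.

Lemma linked_nearly_disjoint E F (i : V) : E \in P -> F \in P -> E != F -> i \in E -> i \in F ->
  (ismin i E && (1 < #|E|)%N && ~~ ismin i F) || (ismin i F && (1 < #|F|)%N && ~~ ismin i E).
Proof.
move=> EP FP EF iE iF; case/and3P: linP => _ _ /forall_inP /(_ E EP) /forall_inP /(_ F FP).
by rewrite EF /= => /forall_inP; apply; rewrite inE iE iF.
Qed.

Lemma linked_block_of_min E F (i : V) : E \in P -> F \in P -> ismin i E -> ismin i F -> E = F.
Proof.
move=> EP FP iE iF; apply/eqP; apply: contraT => EF.
have := linked_nearly_disjoint EP FP EF (proj1 (andP iE)) (proj1 (andP iF)).
by rewrite iE iF !andbF.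
Qed.

Lemma linked_block_sub E : E \in P -> E \subset ground n.
Proof. by move=> EP; case/and3P: linP => _ /eqP <- _; apply: bigcup_sup. Qed.

Lemma linked_cover (k : V) : k \in ground n -> exists2 E, E \in P & k \in E.
Proof. by case/and3P: linP => _ /eqP <- _ /bigcupP. Qed.

Lemma linked_block_min E : E \in P -> exists a, ismin a E.
Proof.
move=> EP; have [i0 i0E] : exists i0, i0 \in E.
  by case/and3P: linP => P0 _ _; apply/set0Pn; apply: contraNneq P0 => <-.
have [a /= aE a_min] := @arg_minnP _ i0 (fun j => j \in E) val i0E.
by exists a; rewrite /ismin aE; apply/forall_inP.
Qed.

End LinkedPartitionFacts.

Definition is_left A (j : V) : bool := [exists d, (j, d) \in A].
Definition is_right A (j : V) : bool := [exists c, (c, j) \in A].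
Definition block_of A (j : V) : {set V} := j |: [set d | (j, d) \in A].
(* Minima of blocks: the left endpoints, and the elements that are no endpoint
   (singleton blocks). *)
Definition block_heads A : {set V} := [set j in ground n | is_left A j || ~~ is_right A j].
Definition partition_of_arcs A : {set {set V}} := [set block_of A j | j in block_heads A].

Section FromArcSystem.
Variables (S : {ffun V -> nat}) (T : {set V}) (A : {set V * V}).
Hypotheses (sysA : arc_system S T A) (S0 : S ord0 = 0%N).

Lemma arc_left_ground p : p \in A -> p.1 \in ground n.
Proof. by move/(arc_left_pos sysA); rewrite inE; apply: contraTneq => ->; rewrite S0. Qed.

Lemma in_block_of (j k : V) : (k \in block_of A j) = (k == j) || ((j, k) \in A).
Proof. by rewrite !inE. Qed.

Lemma ismin_block_of (j : V) : ismin j (block_of A j).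
Proof.
rewrite /ismin setU11; apply/forall_inP => k; rewrite in_block_of => /orP [/eqP -> //|jk].
exact: ltnW (arc_lt sysA jk).
Qed.

Lemma block_of_card (j : V) : is_left A j -> (1 < #|block_of A j|)%N.
Proof.
case/existsP => d jd; rewrite (cardsD1 j) setU11 add1n ltnS card_gt0.
apply/set0Pn; exists d; rewrite !inE jd orbT andbT.
by apply: contraTneq (arc_lt sysA jd) => ->; rewrite ltnn.
Qed.

Lemma not_ismin_block_of (j k : V) : (j, k) \in A -> ~~ ismin k (block_of A j).
Proof.
move=> jk; apply/negP => /ismin_uniq /(_ (ismin_block_of j)) kj.
by move: (arc_lt sysA jk); rewrite kj ltnn.
Qed.

Lemma arcs_partition_of_arcs : arcs (partition_of_arcs A) = A.
Proof.
apply/setP => -[i d]; apply/arcsP/idP => [[E /imsetP [j _ ->] /and3P [ij dE di]]|idA].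
  move: dE; rewrite -(ismin_uniq ij (ismin_block_of j)) in_block_of.
  by rewrite (negbTE di).
exists (block_of A i).
  apply/imsetP; exists i => //; rewrite inE (arc_left_ground idA).
  by apply/orP; left; apply/existsP; exists d.
rewrite ismin_block_of in_block_of idA orbT /=.
by apply: contraTneq (arc_lt sysA idA) => ->; rewrite ltnn.
Qed.

Lemma is_left_of_head (a b : V) : a \in block_heads A -> (b, a) \in A -> is_left A a.
Proof.
rewrite inE => /andP [_ /orP [//|/negP not_right] ba].
by case: not_right; apply/existsP; exists b.
Qed.

Lemma nearly_disjoint_blocks (i j : V) : i \in block_heads A -> j \in block_heads A ->
  i != j -> nearly_disjoint (block_of A i) (block_of A j).
Proof.
move=> iD jD ij; apply/forall_inP => k; rewrite inE !in_block_of.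
case/andP => /orP [/eqP ki|ik] /orP [/eqP kj|jk].
- by move: ij; rewrite -ki -kj eqxx.
- subst k; rewrite ismin_block_of.
  by rewrite block_of_card ?(is_left_of_head iD jk) ?not_ismin_block_of.
- subst k; rewrite orbC ismin_block_of.
  by rewrite block_of_card ?(is_left_of_head jD ik) ?not_ismin_block_of.
- by case: (arc_right_inj sysA ik jk erefl) => ji; rewrite ji eqxx in ij.
Qed.

Lemma linked_partition_of_arcs : linked_partition (partition_of_arcs A).
Proof.
apply/and3P; split.
- by apply/imsetP => -[j _ /(congr1 (fun E => j \in E))]; rewrite in_block_of eqxx inE.
- apply/eqP/setP => k; apply/bigcupP/idP => [[E /imsetP [j jD ->]]|kg].
    rewrite in_block_of => /orP [/eqP ->|jk]; first by move: jD; rewrite inE => /andP [].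
    by rewrite inE; apply: contraTneq (arc_lt sysA jk) => ->.
  have [kD|] := boolP (k \in block_heads A).
    by exists (block_of A k); [apply/imsetP; exists k | rewrite setU11].
  rewrite inE kg /= negb_or negbK => /andP [_ /existsP [c ck]].
  exists (block_of A c); last by rewrite in_block_of ck orbT.
  apply/imsetP; exists c => //; rewrite inE (arc_left_ground ck) /=.
  by apply/orP; left; apply/existsP; exists k.
apply/forall_inP => E /imsetP [i iD ->]; apply/forall_inP => F /imsetP [j jD ->].
by apply/implyP => EF; apply: nearly_disjoint_blocks => //; apply: contraNneq EF => ->.
Qed.

Lemma LP_partition_of_arcs : LP S T (partition_of_arcs A).
Proof.
apply/and3P; split; first exact: linked_partition_of_arcs.
- apply/forallP => i; rewrite -[left_mult _ _]/(left_deg _ i).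
  by rewrite arcs_partition_of_arcs (left_degE sysA).
- apply/forallP => j; rewrite -[right_mult _ _]/(right_deg _ j).
  by rewrite arcs_partition_of_arcs (right_degE sysA).
Qed.

End FromArcSystem.

Lemma arc_system_arcs S T P : LP S T P -> arc_system S T (arcs P).
Proof.
case/and3P => _ left_arcs right_arcs; apply/and3P; split => //.
apply/forall_inP => -[i d] /arcsP [E _ /and3P [/andP [_ /forall_inP i_min] dE di]].
by rewrite /= ltn_neqAle i_min // andbT; apply: contra di => /eqP/val_inj ->.
Qed.

Section ToArcSystem.
Variable P : {set {set V}}.
Hypothesis linP : linked_partition P.

Lemma block_of_arcs E (a : V) : E \in P -> ismin a E -> block_of (arcs P) a = E.
Proof.
move=> EP aE; apply/setP => k; rewrite in_block_of; apply/idP/idP.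
  case/orP => [/eqP ->|/arcsP [F FP /and3P [aF kF _]]]; first by case/andP: aE.
  by rewrite (linked_block_of_min linP EP FP aE aF).
move=> kE; case: (eqVneq k a) => //= ka; apply/arcsP; exists E => //.
by rewrite aE kE ka.
Qed.

Lemma min_block_head E (a : V) : E \in P -> ismin a E -> a \in block_heads (arcs P).
Proof.
move=> EP aE; have aE' : a \in E by case/andP: aE.
rewrite inE (subsetP (linked_block_sub linP EP)) //=.
have [|] := boolP (is_right (arcs P) a); last by rewrite orbT.
case/existsP => c /arcsP [F FP /and3P [cF aF ac]].
have EF : E != F by apply: contraNneq ac => EF; rewrite (@ismin_uniq c a F cF) -?EF.
have := linked_nearly_disjoint linP EP FP EF aE' aF.
rewrite aE andbF orbF /= => /andP [cE _].
have [e] : exists2 e, e \in E & e != a.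
  move: cE; rewrite (cardsD1 a) aE' add1n ltnS card_gt0 => /set0Pn [e].
  by rewrite !inE => /andP [ea eE]; exists e.
move=> eE ea; apply/orP; left; apply/existsP; exists e.
by apply/arcsP; exists E => //; rewrite aE eE ea.
Qed.

Lemma partition_of_arcs_arcs : partition_of_arcs (arcs P) = P.
Proof.
apply/setP => E; apply/imsetP/idP => [[j]|EP].
  rewrite inE => /andP [jg jD] ->.
  have [F FP jF] := linked_cover linP jg.
  have [a aF] := linked_block_min linP FP.
  have [->|ja] := eqVneq j a; first by rewrite (block_of_arcs FP aF).
  have rj : is_right (arcs P) j.
    by apply/existsP; exists a; apply/arcsP; exists F => //; rewrite aF jF ja.
  move: jD; rewrite rj orbF => /existsP [d /arcsP [G GP /and3P [jG _ _]]].
  by rewrite (block_of_arcs GP jG).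
have [a aE] := linked_block_min linP EP.
by exists a; [apply: min_block_head EP aE | rewrite (block_of_arcs EP aE)].
Qed.

End ToArcSystem.

Lemma big_LP_arcs (R : Type) (idx : R) (op : Monoid.com_law idx)
    (S : {ffun V -> nat}) (T : {set V}) (F : {set V * V} -> R) :
  S ord0 = 0%N ->
  \big[op/idx]_(P | LP S T P) F (arcs P) = \big[op/idx]_(A | arc_system S T A) F A.
Proof.
move=> S0; rewrite [RHS](reindex_onto (@arcs n) partition_of_arcs) => [|A sysA].
  apply: eq_bigl => P; apply/idP/idP => [LPP|/andP [sysA /eqP <-]].
    have linP : linked_partition P by case/and3P: LPP.
    by rewrite (arc_system_arcs LPP) partition_of_arcs_arcs ?eqxx.
  exact: LP_partition_of_arcs sysA S0.
exact: arcs_partition_of_arcs sysA S0.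
Qed.

End LinkedPartitionsAsArcSystems.

Lemma local_factorC (R : fieldType) (x y : R) n (S : {ffun 'I_n.+1 -> nat}) T a :
  x != 0 -> y != 0 -> local_factor y x S T a = local_factor x y S T a.
Proof.
move=> x0 y0; rewrite /local_factor; case: (hfun S T a) => h; last by rewrite /qbinom !mulr0.
by rewrite !qbinom_gauss // gaussC.
Qed.

Theorem theorem3p6 (R : fieldType) (n : nat) (S : {ffun 'I_n.+1 -> nat})
  (T : {set 'I_n.+1}) (x y : R) :
  (0 < n)%N ->
  S ord0 = 0%N ->
  T \subset ground n ->
  #|T| = (\sum_(i : 'I_n.+1) S i)%N ->
  x != 0 -> y != 0 -> (forall k : nat, (0 < k)%N -> (x / y) ^+ k != 1) ->
  (\sum_(P : {set {set 'I_n.+1}} | LP S T P) x ^+ cr2 P * y ^+ ne2 P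
     = \prod_(a : 'I_n.+1 | (0 < S a)%N)
         (y ^ ((S a)%:Z * hfun S T a - (S a)%:Z ^+ 2) * qbinom (hfun S T a) (S a) (x / y)))
  /\
  (\sum_(P : {set {set 'I_n.+1}} | LP S T P) x ^+ ne2 P * y ^+ cr2 P
     = \prod_(a : 'I_n.+1 | (0 < S a)%N)
         (y ^ ((S a)%:Z * hfun S T a - (S a)%:Z ^+ 2) * qbinom (hfun S T a) (S a) (x / y))).
Proof.
move=> _ S0 _ cT x0 y0 xy_ratio.
have xy_pow k : (0 < k)%N -> x ^+ k != y ^+ k.
  by move/xy_ratio; apply: contra => /eqP xy; rewrite expr_div_n xy divff // expf_neq0.
have yx_pow k : (0 < k)%N -> y ^+ k != x ^+ k by rewrite eq_sym; apply: xy_pow.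
split.
  by rewrite (big_LP_arcs _ _ (@arc_weight _ x y n)) // arc_system_gf.
under eq_bigr do rewrite mulrC.
rewrite (big_LP_arcs _ _ (@arc_weight _ y x n)) // arc_system_gf //.
by apply: eq_bigr => a _; rewrite local_factorC.
Qed.
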